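(* Let $\mathbf{h}_1,\mathbf{h}_2\in\mathbb{C}^M$ be linearly independent, $P,\sigma^2>0$, $\rho=\|\mathbf{h}_1\|^2/\|\mathbf{h}_2\|^2$, and $\varphi\in(0,\pi/2]$ the Hermitian angle defined by $\cos\varphi=\frac{|\mathbf{h}_1^H\mathbf{h}_2|}{\|\mathbf{h}_1\|\|\mathbf{h}_2\|}$. Let $\nu(\rho,\varphi)=10\log_{10}\frac{\mathrm{SNR}_{\rm md}}{\mathrm{SNR}_{\rm zf}}$. Then: (1) if $0<\rho\le1$ and $0\le\cos\varphi\le\sqrt\rho$: $\nu=10\log_{10}\frac{1+\rho}{1+\rho-2\sqrt\rho\cos\varphi}$; (2) if $0<\rho\le1$ and $\sqrt\rho<\cos\varphi<1$: $\nu=10\log_{10}\frac{1+\rho}{1-\cos^2\varphi}$; (3) if $\rho>1$ and $0\le\cos\varphi\le1/\sqrt\rho$: $\nu=10\log_{10}\frac{1+\rho}{1+\rho-2\sqrt\rho\cos\varphi}$; (4) if $\rho>1$ and $1/\sqrt\rho<\cos\varphi<1$: $\nu=10\log_{10}\frac{1+1/\rho}{1-\cos^2\varphi}$.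
   Context: With $\mathbf{H}=[\mathbf{h}_1\ \mathbf{h}_2]$ and $\mu_1,\mu_2$ the eigenvalues of $\mathbf{H}^H\mathbf{H}$: $\mathrm{SNR}_{\rm zf}=\frac{P}{\sigma^2\sum_{i=1}^2[(\mathbf{H}^H\mathbf{H})^{-1}]_{i,i}}=\frac{P\mu_1\mu_2}{\sigma^2(\mu_1+\mu_2)}$, and $\mathrm{SNR}_{\rm md}=\frac{1}{\sigma^2}\max_{\mathbf{w}\in\mathbb{C}^M,\ \|\mathbf{w}\|^2=P}\min\{|\mathbf{h}_1^H\mathbf{w}|^2,|\mathbf{h}_2^H\mathbf{w}|^2\}$. *)

From Stdlib Require Import Reals List.
Import ListNotations.
Open Scope R_scope.

(* Complex numbers z = (Re z, Im z). *)
Definition Cplx : Type := (R * R)%type.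
Definition C0 : Cplx := (0, 0).
Definition Cadd (z w : Cplx) : Cplx := (fst z + fst w, snd z + snd w).
Definition Cmul (z w : Cplx) : Cplx :=
  (fst z * fst w - snd z * snd w, fst z * snd w + snd z * fst w).
Definition Cconj (z : Cplx) : Cplx := (fst z, - snd z).
Definition Cnorm2 (z : Cplx) : R := fst z * fst z + snd z * snd z.
Definition Cabs (z : Cplx) : R := sqrt (Cnorm2 z).

(* Vectors in Cplx^M are functions nat -> Cplx; only indices 0..M-1 matter. *)
Definition vsum (M : nat) (f : nat -> R) : R :=
  fold_right Rplus 0 (map f (seq 0 M)).

Definition inner (M : nat) (u v : nat -> Cplx) : Cplx :=
  (vsum M (fun i => fst (Cmul (Cconj (u i)) (v i))),
   vsum M (fun i => snd (Cmul (Cconj (u i)) (v i)))).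

Definition vnorm2 (M : nat) (u : nat -> Cplx) : R := vsum M (fun i => Cnorm2 (u i)).

Definition lin_indep2 (M : nat) (h1 h2 : nat -> Cplx) : Prop :=
  forall a b : Cplx,
    (forall i, (i < M)%nat -> Cadd (Cmul a (h1 i)) (Cmul b (h2 i)) = C0) ->
    a = C0 /\ b = C0.

(* Gram matrix G = H^H H = [[g11, g12],[conj g12, g22]],
   g11 = ||h1||^2, g22 = ||h2||^2, g12 = h1^H h2; det G = g11 g22 - |g12|^2.
   Diagonal of G^{-1}: [G^{-1}]_{11} = g22 / det G, [G^{-1}]_{22} = g11 / det G. *)
Definition gram_det (M : nat) (h1 h2 : nat -> Cplx) : R :=
  vnorm2 M h1 * vnorm2 M h2 - Cnorm2 (inner M h1 h2).

(* SNR_zf = P / (sigma^2 * sum_i [(H^H H)^{-1}]_{ii}) *)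
Definition SNR_zf (M : nat) (P s2 : R) (h1 h2 : nat -> Cplx) : R :=
  P / (s2 * (vnorm2 M h2 / gram_det M h1 h2 + vnorm2 M h1 / gram_det M h1 h2)).

Definition md_obj (M : nat) (s2 : R) (h1 h2 w : nat -> Cplx) : R :=
  / s2 * Rmin (Cnorm2 (inner M h1 w)) (Cnorm2 (inner M h2 w)).

Definition is_SNR_md (M : nat) (P s2 : R) (h1 h2 : nat -> Cplx) (v : R) : Prop :=
  (exists w : nat -> Cplx, vnorm2 M w = P /\ md_obj M s2 h1 h2 w = v) /\
  (forall w : nat -> Cplx, vnorm2 M w = P -> md_obj M s2 h1 h2 w <= v).

Definition log10 (x : R) : R := ln x / ln 10.

Definition rho_of (M : nat) (h1 h2 : nat -> Cplx) : R := vnorm2 M h1 / vnorm2 M h2.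

Definition cos_herm (M : nat) (h1 h2 : nat -> Cplx) : R :=
  Cabs (inner M h1 h2) / (sqrt (vnorm2 M h1) * sqrt (vnorm2 M h2)).

From Stdlib Require Import Reals Lra Lia Psatz List.
Open Scope R_scope.

(* With a = ||h1||^2, b = ||h2||^2 and g = |h1^H h2|, both the power constraint
   and min(|h1^H w|^2, |h2^H w|^2) are homogeneous of degree 2 in w, so
   sigma^2 SNR_md / P is the least r with min(...) <= r ||w||^2, attained.
   If a <= g, beamforming along h1 attains the Cauchy-Schwarz bound r = a (and
   symmetrically for b).  Otherwise, for t in [0, 1], matching w against
   t h1 + (1 - t) h2 with both phases aligned to w gives, by Cauchy-Schwarz,
   r <= t^2 a + (1 - t)^2 b + 2 t (1 - t) g; at t = (b - g) / (a + b - 2 g) this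
   equals (a b - g^2) / (a + b - 2 g), and w = t h1 + (1 - t) e^(i theta) h2
   equalizes the two gains and attains it.  Since
   SNR_zf = P (a b - g^2) / (sigma^2 (a + b)), cos phi = g / sqrt (a b) and
   rho = a / b, the four cases follow by algebra, cos phi <= sqrt rho meaning
   g <= a and cos phi <= 1 / sqrt rho meaning g <= b. *)

Lemma vsum_S M f : vsum (S M) f = vsum M f + f M.
Proof.
  unfold vsum; rewrite seq_S, map_app, fold_right_app; simpl.
  generalize (map f (seq 0 M)) as l.
  induction l as [|r l IH]; simpl; [ring|].
  rewrite IH; ring.
Qed.

Lemma vsum_nonneg M f : (forall i, (i < M)%nat -> 0 <= f i) -> 0 <= vsum M f.
Proof.
  induction M as [|M IH]; intros Hf.
  - unfold vsum; simpl; lra.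
  - rewrite vsum_S.
    assert (0 <= vsum M f) by (apply IH; intros; apply Hf; lia).
    assert (0 <= f M) by (apply Hf; lia).
    lra.
Qed.

Lemma vsum_eq0 M f : (forall i, (i < M)%nat -> 0 <= f i) -> vsum M f = 0 ->
  forall i, (i < M)%nat -> f i = 0.
Proof.
  induction M as [|M IH]; intros Hf H0 i Hi; [lia|].
  rewrite vsum_S in H0.
  assert (0 <= vsum M f) by (apply vsum_nonneg; intros; apply Hf; lia).
  assert (0 <= f M) by (apply Hf; lia).
  destruct (Nat.eq_dec i M) as [->|Hne]; [lra|].
  apply IH; [intros; apply Hf; lia | lra | lia].
Qed.

Definition csum (M : nat) (f : nat -> Cplx) : Cplx :=
  (vsum M (fun i => fst (f i)), vsum M (fun i => snd (f i))).

Lemma csum_S M f : csum (S M) f = Cadd (csum M f) (f M).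
Proof. unfold csum, Cadd; simpl; rewrite !vsum_S; reflexivity. Qed.

Lemma csum_ext M f g : (forall i, (i < M)%nat -> f i = g i) -> csum M f = csum M g.
Proof.
  induction M as [|M IH]; intros Hfg; [reflexivity|].
  rewrite !csum_S, IH, (Hfg M) by (intros; try apply Hfg; lia); reflexivity.
Qed.

Lemma csum_lin2 M p f q g :
  csum M (fun i => Cadd (Cmul p (f i)) (Cmul q (g i))) =
  Cadd (Cmul p (csum M f)) (Cmul q (csum M g)).
Proof.
  induction M as [|M IH].
  - unfold csum, vsum, Cadd, Cmul; simpl; f_equal; ring.
  - rewrite !csum_S, IH.
    destruct p, q, (csum M f), (csum M g), (f M), (g M); unfold Cadd, Cmul; simpl.
    f_equal; ring.
Qed.

Lemma csum_scal M p f : csum M (fun i => Cmul p (f i)) = Cmul p (csum M f).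
Proof.
  induction M as [|M IH]; [unfold csum, vsum, Cmul; simpl; f_equal; ring|].
  rewrite !csum_S, IH.
  destruct p, (csum M f), (f M); unfold Cadd, Cmul; simpl; f_equal; ring.
Qed.

Lemma csum_conj M f : csum M (fun i => Cconj (f i)) = Cconj (csum M f).
Proof.
  induction M as [|M IH]; [unfold csum, vsum, Cconj; simpl; f_equal; ring|].
  rewrite !csum_S, IH.
  destruct (csum M f), (f M); unfold Cadd, Cconj; simpl; f_equal; ring.
Qed.

Lemma csum_real M f : csum M (fun i => (f i, 0)) = (vsum M f, 0).
Proof.
  induction M as [|M IH]; [reflexivity|].
  rewrite csum_S, IH, vsum_S; unfold Cadd; simpl; f_equal; ring.
Qed.

Definition Copp (z : Cplx) : Cplx := (- fst z, - snd z).

Lemma Cnorm2_nonneg z : 0 <= Cnorm2 z.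
Proof. destruct z; unfold Cnorm2; simpl; nra. Qed.

Lemma Cnorm2_eq0 z : Cnorm2 z = 0 -> z = C0.
Proof.
  destruct z as [x y]; unfold Cnorm2, C0; simpl; intros H.
  f_equal; nra.
Qed.

Lemma Cnorm2_mul z w : Cnorm2 (Cmul z w) = Cnorm2 z * Cnorm2 w.
Proof. destruct z, w; unfold Cnorm2, Cmul; simpl; ring. Qed.

Lemma Cnorm2_conj z : Cnorm2 (Cconj z) = Cnorm2 z.
Proof. destruct z; unfold Cnorm2, Cconj; simpl; ring. Qed.

Lemma Cnorm2_real r : Cnorm2 (r, 0) = r * r.
Proof. unfold Cnorm2; simpl; ring. Qed.

Lemma Cabs_nonneg z : 0 <= Cabs z.
Proof. apply sqrt_pos. Qed.

Lemma Cabs_sqr z : Cabs z * Cabs z = Cnorm2 z.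
Proof. apply sqrt_sqrt, Cnorm2_nonneg. Qed.

Lemma Cabs_mul z w : Cabs (Cmul z w) = Cabs z * Cabs w.
Proof. unfold Cabs; rewrite Cnorm2_mul; apply sqrt_mult_alt, Cnorm2_nonneg. Qed.

Lemma Cabs_conj z : Cabs (Cconj z) = Cabs z.
Proof. unfold Cabs; rewrite Cnorm2_conj; reflexivity. Qed.

Lemma Cabs_real r : 0 <= r -> Cabs (r, 0) = r.
Proof. intros Hr; unfold Cabs; rewrite Cnorm2_real; apply sqrt_square, Hr. Qed.

Lemma Re_le_Cabs z : fst z <= Cabs z.
Proof.
  pose proof (Cabs_sqr z); pose proof (Cabs_nonneg z).
  destruct z as [x y]; unfold Cnorm2 in *; simpl in *; nra.
Qed.

Definition realign (z : Cplx) : Cplx :=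
  if Req_EM_T (Cnorm2 z) 0 then (1, 0) else (fst z / Cabs z, - snd z / Cabs z).

Lemma Cnorm2_realign z : Cnorm2 (realign z) = 1.
Proof.
  unfold realign; destruct (Req_EM_T (Cnorm2 z) 0) as [_|Hz]; [unfold Cnorm2; simpl; ring|].
  pose proof (Cabs_sqr z) as Habs.
  assert (Cabs z <> 0) by (intros E; rewrite E in Habs; lra).
  destruct z as [x y]; unfold Cnorm2 in *; simpl in *.
  apply (Rmult_eq_reg_r (Cabs (x, y) * Cabs (x, y))); [|nra].
  field_simplify; [lra|auto].
Qed.

Lemma Cabs_realign z : Cabs (realign z) = 1.
Proof. unfold Cabs; rewrite Cnorm2_realign; apply sqrt_1. Qed.

Lemma Cmul_realign z : Cmul (realign z) z = (Cabs z, 0).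
Proof.
  unfold realign; destruct (Req_EM_T (Cnorm2 z) 0) as [Hz|Hz].
  - rewrite (Cnorm2_eq0 z Hz); unfold Cabs, Cnorm2, Cmul, C0; simpl.
    replace (0 * 0 + 0 * 0) with 0 by ring; rewrite sqrt_0; f_equal; ring.
  - pose proof (Cabs_sqr z) as Habs.
    assert (Cabs z <> 0) by (intros E; rewrite E in Habs; lra).
    destruct z as [x y]; unfold Cnorm2, Cmul in *; simpl in *.
    f_equal; [|field; auto].
    apply (Rmult_eq_reg_r (Cabs (x, y))); [|auto].
    field_simplify; [lra|auto].
Qed.

Lemma Cconj_realign z : Cconj z = Cmul (Cabs z, 0) (realign z).
Proof.
  unfold realign; destruct (Req_EM_T (Cnorm2 z) 0) as [Hz|Hz].
  - rewrite (Cnorm2_eq0 z Hz); unfold Cabs, Cnorm2, Cmul, Cconj, C0; simpl.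
    replace (0 * 0 + 0 * 0) with 0 by ring; rewrite sqrt_0; f_equal; ring.
  - pose proof (Cabs_sqr z) as Habs.
    assert (Cabs z <> 0) by (intros E; rewrite E in Habs; lra).
    destruct z as [x y]; unfold Cmul, Cconj; simpl.
    f_equal; field; auto.
Qed.

Lemma Cconj_involutive z : Cconj (Cconj z) = z.
Proof. destruct z; unfold Cconj; simpl; f_equal; ring. Qed.

Lemma Cmul_assoc x y z : Cmul (Cmul x y) z = Cmul x (Cmul y z).
Proof. destruct x, y, z; unfold Cmul; simpl; f_equal; ring. Qed.

Definition comb (p : Cplx) (x : nat -> Cplx) (q : Cplx) (y : nat -> Cplx) : nat -> Cplx :=
  fun i => Cadd (Cmul p (x i)) (Cmul q (y i)).

Definition scale (k : R) (x : nat -> Cplx) : nat -> Cplx := fun i => Cmul (k, 0) (x i).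

Section InnerProduct.

Variable M : nat.

Lemma inner_csum h u : inner M h u = csum M (fun i => Cmul (Cconj (h i)) (u i)).
Proof. reflexivity. Qed.

Lemma inner_comb_r h p x q y :
  inner M h (comb p x q y) = Cadd (Cmul p (inner M h x)) (Cmul q (inner M h y)).
Proof.
  rewrite !inner_csum, <- (csum_lin2 M p _ q _).
  apply csum_ext; intros i _; unfold comb.
  destruct (h i), (x i), (y i), p, q; unfold Cadd, Cmul, Cconj; simpl; f_equal; ring.
Qed.

Lemma inner_scale_r h k x : inner M h (scale k x) = Cmul (k, 0) (inner M h x).
Proof.
  rewrite !inner_csum, <- (csum_scal M (k, 0) _).
  apply csum_ext; intros i _; unfold scale.
  destruct (h i), (x i); unfold Cmul, Cconj; simpl; f_equal; ring.
Qed.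

Lemma inner_conj_sym x y : inner M y x = Cconj (inner M x y).
Proof.
  rewrite !inner_csum, <- (csum_conj M _).
  apply csum_ext; intros i _.
  destruct (x i), (y i); unfold Cmul, Cconj; simpl; f_equal; ring.
Qed.

Lemma Cabs_inner_sym x y : Cabs (inner M y x) = Cabs (inner M x y).
Proof. rewrite inner_conj_sym; apply Cabs_conj. Qed.

Lemma inner_self x : inner M x x = (vnorm2 M x, 0).
Proof.
  rewrite inner_csum; unfold vnorm2; rewrite <- csum_real.
  apply csum_ext; intros i _.
  destruct (x i); unfold Cmul, Cconj, Cnorm2; simpl; f_equal; ring.
Qed.

Lemma inner_comb_l w p x q y :
  inner M (comb p x q y) w = Cadd (Cmul (Cconj p) (inner M x w)) (Cmul (Cconj q) (inner M y w)).
Proof.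
  rewrite inner_conj_sym, inner_comb_r, (inner_conj_sym w x), (inner_conj_sym w y).
  destruct p, q, (inner M w x), (inner M w y); unfold Cadd, Cmul, Cconj; simpl; f_equal; ring.
Qed.

Lemma vnorm2_inner x : vnorm2 M x = fst (inner M x x).
Proof. rewrite inner_self; reflexivity. Qed.

Lemma vnorm2_nonneg x : 0 <= vnorm2 M x.
Proof. apply vsum_nonneg; intros; apply Cnorm2_nonneg. Qed.

Lemma vnorm2_eq0 x : vnorm2 M x = 0 -> forall i, (i < M)%nat -> x i = C0.
Proof.
  intros Hx i Hi; apply Cnorm2_eq0.
  apply (vsum_eq0 M (fun i => Cnorm2 (x i))); auto.
  intros; apply Cnorm2_nonneg.
Qed.

Lemma vnorm2_scale k x : vnorm2 M (scale k x) = k * k * vnorm2 M x.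
Proof.
  rewrite vnorm2_inner, inner_scale_r, inner_conj_sym, inner_scale_r, inner_self.
  unfold Cmul, Cconj; simpl; ring.
Qed.

Lemma vnorm2_comb p x q y :
  vnorm2 M (comb p x q y) =
  Cnorm2 p * vnorm2 M x + Cnorm2 q * vnorm2 M y + 2 * fst (Cmul (Cmul (Cconj p) q) (inner M x y)).
Proof.
  rewrite vnorm2_inner, inner_comb_l, !inner_comb_r, !inner_self, (inner_conj_sym x y).
  destruct p, q, (inner M x y); unfold Cadd, Cmul, Cconj, Cnorm2; simpl; ring.
Qed.

Lemma vnorm2_comb_le p x q y :
  vnorm2 M (comb p x q y) <=
  Cabs p * Cabs p * vnorm2 M x + Cabs q * Cabs q * vnorm2 M y +
  2 * (Cabs p * Cabs q * Cabs (inner M x y)).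
Proof.
  rewrite vnorm2_comb, !Cabs_sqr.
  pose proof (Re_le_Cabs (Cmul (Cmul (Cconj p) q) (inner M x y))) as Hre.
  rewrite !Cabs_mul, Cabs_conj in Hre; lra.
Qed.

Lemma vnorm2_gram_comb x y :
  vnorm2 M (comb (vnorm2 M y, 0) x (Copp (inner M y x)) y) =
  vnorm2 M y * (vnorm2 M x * vnorm2 M y - Cnorm2 (inner M x y)).
Proof.
  rewrite vnorm2_comb, Cnorm2_real, (inner_conj_sym x y).
  destruct (inner M x y); unfold Copp, Cmul, Cconj, Cnorm2; simpl; ring.
Qed.

Lemma Cauchy_Schwarz x y : Cnorm2 (inner M x y) <= vnorm2 M x * vnorm2 M y.
Proof.
  pose proof (vnorm2_gram_comb x y) as Hgram.
  pose proof (vnorm2_nonneg (comb (vnorm2 M y, 0) x (Copp (inner M y x)) y)).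
  pose proof (vnorm2_nonneg x); pose proof (vnorm2_nonneg y).
  destruct (Req_EM_T (vnorm2 M y) 0) as [Hy|Hy]; [|nra].
  assert (Hxy : inner M x y = inner M x (scale 0 y)).
  { rewrite !inner_csum; apply csum_ext; intros i Hi; unfold scale.
    rewrite (vnorm2_eq0 y Hy i Hi); unfold Cmul, C0; simpl; f_equal; ring. }
  rewrite Hxy, inner_scale_r, Cnorm2_mul, Cnorm2_real, Hy; lra.
Qed.

Lemma lin_indep2_vnorm2_pos_r h1 h2 : lin_indep2 M h1 h2 -> 0 < vnorm2 M h2.
Proof.
  intros Hindep; pose proof (vnorm2_nonneg h2).
  destruct (Req_EM_T (vnorm2 M h2) 0) as [Hz|Hz]; [exfalso|lra].
  destruct (Hindep C0 (1, 0)) as [_ Hone].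
  - intros i Hi; rewrite (vnorm2_eq0 h2 Hz i Hi).
    destruct (h1 i); unfold Cadd, Cmul, C0; simpl; f_equal; ring.
  - injection Hone; lra.
Qed.

Lemma lin_indep2_gram_det_pos h1 h2 :
  lin_indep2 M h1 h2 -> Cnorm2 (inner M h1 h2) < vnorm2 M h1 * vnorm2 M h2.
Proof.
  intros Hindep.
  pose proof (lin_indep2_vnorm2_pos_r h1 h2 Hindep) as Hb.
  destruct (Rle_lt_or_eq_dec _ _ (Cauchy_Schwarz h1 h2)) as [|Heq]; [assumption|exfalso].
  pose proof (vnorm2_gram_comb h1 h2) as Hgram.
  rewrite Heq, Rminus_diag, Rmult_0_r in Hgram.
  destruct (Hindep (vnorm2 M h2, 0) (Copp (inner M h2 h1))) as [Hzero _].
  - exact (vnorm2_eq0 _ Hgram).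
  - injection Hzero; lra.
Qed.

Lemma lin_indep2_vnorm2_pos_l h1 h2 : lin_indep2 M h1 h2 -> 0 < vnorm2 M h1.
Proof.
  intros Hindep.
  pose proof (lin_indep2_vnorm2_pos_r h1 h2 Hindep).
  pose proof (lin_indep2_gram_det_pos h1 h2 Hindep).
  pose proof (Cnorm2_nonneg (inner M h1 h2)); nra.
Qed.

End InnerProduct.

Definition min_gain (M : nat) (x y w : nat -> Cplx) : R :=
  Rmin (Cnorm2 (inner M x w)) (Cnorm2 (inner M y w)).

Lemma md_obj_min_gain M s2 x y w : md_obj M s2 x y w = min_gain M x y w / s2.
Proof. unfold md_obj, min_gain, Rdiv; ring. Qed.

Lemma Rmin_scale c u v : 0 <= c -> Rmin (c * u) (c * v) = c * Rmin u v.
Proof. intros Hc; unfold Rmin; destruct (Rle_dec (c * u) (c * v)), (Rle_dec u v); nra. Qed.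

Lemma min_gain_scale M x y k w : min_gain M x y (scale k w) = k * k * min_gain M x y w.
Proof.
  unfold min_gain; rewrite !inner_scale_r, !Cnorm2_mul, Cnorm2_real.
  apply Rmin_scale; nra.
Qed.

Lemma Rmin_sqr_le_convex u v t : 0 <= u -> 0 <= v -> 0 <= t <= 1 ->
  Rmin (u * u) (v * v) <= (t * u + (1 - t) * v) * (t * u + (1 - t) * v).
Proof.
  intros Hu Hv Ht.
  destruct (Rle_lt_dec u v) as [Huv|Hvu].
  - rewrite Rmin_left by nra.
    assert (u <= t * u + (1 - t) * v) by nra; nra.
  - rewrite Rmin_right by nra.
    assert (v <= t * u + (1 - t) * v) by nra; nra.
Qed.

Lemma is_SNR_md_unique M P s2 x y v v' :
  is_SNR_md M P s2 x y v -> is_SNR_md M P s2 x y v' -> v = v'.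
Proof.
  intros [[w [Hw <-]] Hub] [[w' [Hw' <-]] Hub'].
  apply Rle_antisym; [apply Hub' | apply Hub]; assumption.
Qed.

Lemma is_SNR_md_sym M P s2 x y v : is_SNR_md M P s2 x y v -> is_SNR_md M P s2 y x v.
Proof.
  unfold is_SNR_md, md_obj; intros [[w [Hw Hv]] Hub]; split.
  - exists w; rewrite Rmin_comm; auto.
  - intros w' Hw'; rewrite Rmin_comm; auto.
Qed.

Lemma is_SNR_md_of_gain_ratio M P s2 x y r : 0 < P -> 0 < s2 ->
  (exists w, 0 < vnorm2 M w /\ min_gain M x y w = r * vnorm2 M w) ->
  (forall w, min_gain M x y w <= r * vnorm2 M w) ->
  is_SNR_md M P s2 x y (P * r / s2).
Proof.
  intros HP Hs2 [w0 [Hw0 Hgain0]] Hbound; split.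
  - set (k := sqrt (P / vnorm2 M w0)).
    assert (Hk : k * k = P / vnorm2 M w0) by (apply sqrt_sqrt; apply Rlt_le, Rdiv_lt_0_compat; lra).
    exists (scale k w0); rewrite md_obj_min_gain, vnorm2_scale, min_gain_scale, Hgain0, Hk.
    split; field; lra.
  - intros w Hw; rewrite md_obj_min_gain.
    apply Rmult_le_compat_r; [apply Rlt_le, Rinv_0_lt_compat; lra|].
    rewrite Rmult_comm, <- Hw; apply Hbound.
Qed.

Lemma is_SNR_md_matched M P s2 x y : 0 < P -> 0 < s2 -> 0 < vnorm2 M x ->
  vnorm2 M x <= Cabs (inner M x y) -> is_SNR_md M P s2 x y (P * vnorm2 M x / s2).
Proof.
  intros HP Hs2 Ha Hga; apply is_SNR_md_of_gain_ratio; auto.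
  - exists x; split; [assumption|].
    unfold min_gain; rewrite inner_self, (inner_conj_sym M x y), Cnorm2_conj, Cnorm2_real.
    rewrite <- Cabs_sqr; apply Rmin_left; nra.
  - intros w; unfold min_gain.
    eapply Rle_trans; [apply Rmin_l | apply Cauchy_Schwarz].
Qed.

Lemma min_gain_le_convex M x y w t : 0 <= t <= 1 ->
  min_gain M x y w <=
  (t * t * vnorm2 M x + (1 - t) * (1 - t) * vnorm2 M y + 2 * (t * (1 - t) * Cabs (inner M x y)))
  * vnorm2 M w.
Proof.
  intros Ht.
  set (u := inner M x w); set (v := inner M y w).
  set (p := Cconj (Cmul (t, 0) (realign u))); set (q := Cconj (Cmul (1 - t, 0) (realign v))).
  assert (Hzw : inner M (comb p x q y) w = (t * Cabs u + (1 - t) * Cabs v, 0)).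
  { rewrite inner_comb_l; unfold p, q; rewrite !Cconj_involutive, !Cmul_assoc.
    fold u v; rewrite !Cmul_realign; unfold Cadd, Cmul; simpl; f_equal; ring. }
  assert (Hp : Cabs p = t) by (unfold p; rewrite Cabs_conj, Cabs_mul, Cabs_realign, Cabs_real; lra).
  assert (Hq : Cabs q = 1 - t) by (unfold q; rewrite Cabs_conj, Cabs_mul, Cabs_realign, Cabs_real; lra).
  pose proof (vnorm2_comb_le M p x q y) as Hz; rewrite Hp, Hq in Hz.
  pose proof (Cauchy_Schwarz M (comb p x q y) w) as Hcs; rewrite Hzw, Cnorm2_real in Hcs.
  pose proof (vnorm2_nonneg M w).
  unfold min_gain; fold u v; rewrite <- !Cabs_sqr.
  eapply Rle_trans; [apply (Rmin_sqr_le_convex _ _ t); auto using Cabs_nonneg|].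
  eapply Rle_trans; [exact Hcs|].
  apply Rmult_le_compat_r; assumption.
Qed.

Lemma is_SNR_md_balanced M P s2 x y : 0 < P -> 0 < s2 ->
  Cnorm2 (inner M x y) < vnorm2 M x * vnorm2 M y ->
  Cabs (inner M x y) <= vnorm2 M x -> Cabs (inner M x y) <= vnorm2 M y ->
  is_SNR_md M P s2 x y
    (P * ((vnorm2 M x * vnorm2 M y - Cabs (inner M x y) * Cabs (inner M x y)) /
          (vnorm2 M x + vnorm2 M y - 2 * Cabs (inner M x y))) / s2).
Proof.
  intros HP Hs2 Hdet Hga Hgb.
  set (a := vnorm2 M x) in *; set (b := vnorm2 M y) in *; set (G := inner M x y) in *.
  pose proof (Cabs_sqr G) as Hg2; pose proof (Cabs_nonneg G) as Hg0.
  set (g := Cabs G) in *.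
  assert (HD : 0 < a + b - 2 * g) by nra.
  set (f := (a * b - g * g) / (a + b - 2 * g)).
  assert (Hf : 0 < f) by (apply Rdiv_lt_0_compat; lra).
  set (t := (b - g) / (a + b - 2 * g)).
  assert (Ht : 0 <= t <= 1).
  { unfold t; split; [apply Rmult_le_pos; [lra | apply Rlt_le, Rinv_0_lt_compat; lra]|].
    apply Rmult_le_reg_r with (a + b - 2 * g); [lra|]; field_simplify; lra. }
  assert (Ex : t * a + (1 - t) * g = f) by (unfold t, f; field; lra).
  assert (Ey : t * g + (1 - t) * b = f) by (unfold t, f; field; lra).
  assert (Ew : t * t * a + (1 - t) * (1 - t) * b + 2 * (t * (1 - t) * g) = f)
    by (unfold t, f; field; lra).
  apply is_SNR_md_of_gain_ratio; auto.
  - set (w := comb (t, 0) x (Cmul (1 - t, 0) (realign G)) y).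
    assert (Hw : vnorm2 M w = f).
    { unfold w; rewrite vnorm2_comb, Cnorm2_mul, !Cnorm2_real, Cnorm2_realign.
      fold a b G; rewrite <- Ew.
      replace (Cmul (Cmul (Cconj (t, 0)) (Cmul (1 - t, 0) (realign G))) G)
        with (Cmul (Cmul (Cconj (t, 0)) (1 - t, 0)) (Cmul (realign G) G))
        by (rewrite !Cmul_assoc; reflexivity).
      rewrite Cmul_realign; unfold Cmul, Cconj; simpl; fold g; ring. }
    assert (Hxw : inner M x w = (f, 0)).
    { unfold w; rewrite inner_comb_r, inner_self, Cmul_assoc, Cmul_realign; fold a G g.
      rewrite <- Ex; unfold Cadd, Cmul; simpl; f_equal; ring. }
    assert (Hyw : inner M y w = Cmul (f, 0) (realign G)).
    { unfold w; rewrite inner_comb_r, inner_self, (inner_conj_sym M x y), Cconj_realign; fold b G g.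
      rewrite <- Ey; destruct (realign G); unfold Cadd, Cmul; simpl; f_equal; ring. }
    exists w; split; [lra|].
    unfold min_gain; rewrite Hxw, Hyw, Cnorm2_mul, Cnorm2_real, Cnorm2_realign, Hw.
    rewrite Rmult_1_r; apply Rmin_left, Rle_refl.
  - intros w; rewrite <- Ew; apply min_gain_le_convex, Ht.
Qed.

Lemma SNR_zf_gram M P s2 h1 h2 : 0 < gram_det M h1 h2 -> 0 < s2 ->
  0 < vnorm2 M h1 + vnorm2 M h2 ->
  SNR_zf M P s2 h1 h2 = P * gram_det M h1 h2 / (s2 * (vnorm2 M h1 + vnorm2 M h2)).
Proof. intros; unfold SNR_zf; field; lra. Qed.

Lemma SNR_md_over_SNR_zf M P s2 h1 h2 snr :
  lin_indep2 M h1 h2 -> 0 < P -> 0 < s2 -> is_SNR_md M P s2 h1 h2 snr ->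
  let a := vnorm2 M h1 in let b := vnorm2 M h2 in let g := Cabs (inner M h1 h2) in
  (g <= a -> g <= b -> snr / SNR_zf M P s2 h1 h2 = (a + b) / (a + b - 2 * g)) /\
  (a <= g -> snr / SNR_zf M P s2 h1 h2 = a * (a + b) / (a * b - g * g)) /\
  (b <= g -> snr / SNR_zf M P s2 h1 h2 = b * (a + b) / (a * b - g * g)).
Proof.
  intros Hindep HP Hs2 Hsnr; cbv zeta.
  pose proof (lin_indep2_vnorm2_pos_l M h1 h2 Hindep) as Ha.
  pose proof (lin_indep2_vnorm2_pos_r M h1 h2 Hindep) as Hb.
  pose proof (lin_indep2_gram_det_pos M h1 h2 Hindep) as Hdet.
  pose proof Hdet as Hgg; rewrite <- Cabs_sqr in Hgg.
  rewrite SNR_zf_gram by (unfold gram_det; lra); unfold gram_det; rewrite <- Cabs_sqr.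
  split; [|split].
  - intros Hga Hgb.
    assert (0 < vnorm2 M h1 + vnorm2 M h2 - 2 * Cabs (inner M h1 h2)) by nra.
    rewrite (is_SNR_md_unique _ _ _ _ _ _ _ Hsnr (is_SNR_md_balanced M P s2 h1 h2 HP Hs2 Hdet Hga Hgb)).
    field; lra.
  - intros Hag.
    rewrite (is_SNR_md_unique _ _ _ _ _ _ _ Hsnr (is_SNR_md_matched M P s2 h1 h2 HP Hs2 Ha Hag)).
    field; lra.
  - intros Hbg; apply is_SNR_md_sym in Hsnr; rewrite <- (Cabs_inner_sym M h1 h2) in Hbg.
    rewrite (is_SNR_md_unique _ _ _ _ _ _ _ Hsnr (is_SNR_md_matched M P s2 h2 h1 HP Hs2 Hb Hbg)).
    field; lra.
Qed.

Lemma Rdiv_le_div_iff x y u v : 0 < u -> 0 < v -> x / u <= y / v <-> x * v <= y * u.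
Proof.
  intros Hu Hv.
  replace (x * v) with (x / u * (u * v)) by (field; lra).
  replace (y * u) with (y / v * (u * v)) by (field; lra).
  split; intros H; [apply Rmult_le_compat_r | apply Rmult_le_reg_r with (u * v)]; nra.
Qed.

Section HermitianAngle.

Variables (M : nat) (h1 h2 : nat -> Cplx).
Hypotheses (Ha : 0 < vnorm2 M h1) (Hb : 0 < vnorm2 M h2).

Lemma sqrt_rho_of : sqrt (rho_of M h1 h2) = sqrt (vnorm2 M h1) / sqrt (vnorm2 M h2).
Proof. apply sqrt_div_alt, Hb. Qed.

Lemma rho_of_le_1_iff : rho_of M h1 h2 <= 1 <-> vnorm2 M h1 <= vnorm2 M h2.
Proof.
  unfold rho_of; rewrite <- (Rdiv_1_r 1), Rdiv_le_div_iff by lra.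
  rewrite Rmult_1_r, Rmult_1_l; reflexivity.
Qed.

Let sa := sqrt (vnorm2 M h1).
Let sb := sqrt (vnorm2 M h2).

Lemma sqrt_vnorm2_spec :
  0 < sa /\ 0 < sb /\ vnorm2 M h1 = sa * sa /\ vnorm2 M h2 = sb * sb.
Proof.
  unfold sa, sb; repeat split; try (apply sqrt_lt_R0; assumption);
  symmetry; apply sqrt_sqrt; lra.
Qed.

Lemma sqrt_rho_mul_cos_herm :
  sqrt (rho_of M h1 h2) * cos_herm M h1 h2 = Cabs (inner M h1 h2) / vnorm2 M h2.
Proof.
  rewrite sqrt_rho_of; unfold cos_herm; fold sa sb.
  destruct sqrt_vnorm2_spec as (Hsa & Hsb & _ & ->); field; lra.
Qed.

Lemma cos_herm_sqr :
  cos_herm M h1 h2 ^ 2 = Cabs (inner M h1 h2) * Cabs (inner M h1 h2) / (vnorm2 M h1 * vnorm2 M h2).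
Proof.
  unfold cos_herm; fold sa sb.
  destruct sqrt_vnorm2_spec as (Hsa & Hsb & -> & ->); field; lra.
Qed.

Lemma cos_herm_le_sqrt_rho_iff :
  cos_herm M h1 h2 <= sqrt (rho_of M h1 h2) <-> Cabs (inner M h1 h2) <= vnorm2 M h1.
Proof.
  rewrite sqrt_rho_of; unfold cos_herm; fold sa sb.
  destruct sqrt_vnorm2_spec as (Hsa & Hsb & -> & _).
  rewrite Rdiv_le_div_iff by nra.
  split; intros H; nra.
Qed.

Lemma cos_herm_le_inv_sqrt_rho_iff :
  cos_herm M h1 h2 <= 1 / sqrt (rho_of M h1 h2) <-> Cabs (inner M h1 h2) <= vnorm2 M h2.
Proof.
  rewrite sqrt_rho_of; unfold cos_herm; fold sa sb.
  destruct sqrt_vnorm2_spec as (Hsa & Hsb & _ & ->).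
  replace (1 / (sa / sb)) with (sb / sa) by (field; lra).
  rewrite Rdiv_le_div_iff by nra.
  split; intros H; nra.
Qed.

End HermitianAngle.

Theorem corollary3 (M : nat) (h1 h2 : nat -> Cplx) (P s2 : R) :
  lin_indep2 M h1 h2 -> 0 < P -> 0 < s2 ->
  forall snr_md : R, is_SNR_md M P s2 h1 h2 snr_md ->
  let rho := rho_of M h1 h2 in
  let c := cos_herm M h1 h2 in
  let nu := 10 * log10 (snr_md / SNR_zf M P s2 h1 h2) in
  (0 < rho <= 1 -> 0 <= c <= sqrt rho ->
     nu = 10 * log10 ((1 + rho) / (1 + rho - 2 * sqrt rho * c))) /\
  (0 < rho <= 1 -> sqrt rho < c < 1 ->
     nu = 10 * log10 ((1 + rho) / (1 - c ^ 2))) /\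
  (rho > 1 -> 0 <= c <= 1 / sqrt rho ->
     nu = 10 * log10 ((1 + rho) / (1 + rho - 2 * sqrt rho * c))) /\
  (rho > 1 -> 1 / sqrt rho < c < 1 ->
     nu = 10 * log10 ((1 + 1 / rho) / (1 - c ^ 2))).
Proof.
  intros Hindep HP Hs2 snr Hsnr; cbv zeta.
  pose proof (lin_indep2_vnorm2_pos_l M h1 h2 Hindep) as Ha.
  pose proof (lin_indep2_vnorm2_pos_r M h1 h2 Hindep) as Hb.
  pose proof (lin_indep2_gram_det_pos M h1 h2 Hindep) as Hdet; rewrite <- Cabs_sqr in Hdet.
  destruct (SNR_md_over_SNR_zf M P s2 h1 h2 snr Hindep HP Hs2 Hsnr) as (Hbal & Hx & Hy).
  pose proof (rho_of_le_1_iff M h1 h2 Hb) as Hrho.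
  pose proof (cos_herm_le_sqrt_rho_iff M h1 h2 Ha Hb) as Hcx.
  pose proof (cos_herm_le_inv_sqrt_rho_iff M h1 h2 Ha Hb) as Hcy.
  rewrite !(Rmult_assoc 2 (sqrt _)), (sqrt_rho_mul_cos_herm M h1 h2 Ha Hb).
  rewrite (cos_herm_sqr M h1 h2 Ha Hb); unfold rho_of in *.
  split; [|split; [|split]]; intros Hr Hc.
  - assert (Cabs (inner M h1 h2) <= vnorm2 M h1) by (apply Hcx; lra).
    assert (vnorm2 M h1 <= vnorm2 M h2) by (apply Hrho; lra).
    rewrite Hbal by lra; f_equal; f_equal; field; nra.
  - rewrite Hx by (apply Rlt_le, Rnot_le_lt; rewrite <- Hcx; lra).
    f_equal; f_equal; field; nra.
  - assert (vnorm2 M h2 < vnorm2 M h1) by (apply Rnot_le_lt; rewrite <- Hrho; lra).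
    assert (Cabs (inner M h1 h2) <= vnorm2 M h2) by (apply Hcy; lra).
    rewrite Hbal by lra; f_equal; f_equal; field; nra.
  - rewrite Hy by (apply Rlt_le, Rnot_le_lt; rewrite <- Hcy; lra).
    f_equal; f_equal; field; nra.
Qed.
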